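(* With notation as in the context, for each $1\le m\le d$ the series $I_m=\sum_{k>dn,\ k\equiv m \pmod d}P_n(k)$ converges and \[ I_m=\sum_{\substack{2\le j\le a\\ j\equiv a\ (\mathrm{mod}\ 2)}}A_j\,\zeta_m(j)-B_m, \] where $A_j=\sum_{l=-n}^nA_{l,j}(n)$ and \[ B_m=\sum_{j=1}^a\sum_{l=-n}^{n}A_{l,j}(n)\Bigl(\frac1{m^j}+\frac1{(d+m)^j}+\cdots+\frac1{(d(n-l-1)+m)^j}\Bigr) \] (the inner sum being over the terms $1/(dk+m)^j$ for $0\le k\le n-l-1$, empty if $l=n$). Consequently, for any real $a_1,\dots,a_d$, $I=\sum_{m=1}^d a_mI_m$ equals $\sum_{2\le j\le a,\,j\equiv a(2)}A_jL(j)-\sum_{m=1}^dB_ma_m$ where $L(s)=\sum_{k\ge1}a_kk^{-s}$ with $a_{k+d}=a_k$.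
   Context: Fix positive integers $d,a,b$ with $a\ge 2b$ and a positive integer $n$. Let $Q_n(t)=\prod_{dn<l\le (d+2b)n}(t-l)(t+l)$, $R_n(t)=\bigl(\prod_{-n\le l\le n}(t-dl)\bigr)^a$, and $P_n(t)=\frac{Q_n(t)}{R_n(t)}((2n)!)^{a-2b}d^{2na}$, with unique partial fraction decomposition $P_n(t)=\sum_{j=1}^{a}\sum_{l=-n}^n A_{l,j}(n)(t-dl)^{-j}$, $A_{l,j}(n)\in\mathbb Q$. For $1\le m\le d$ and $\mathrm{Re}(s)>1$, $\zeta_m(s)=\sum_{k\ge1,\ k\equiv m\ (\mathrm{mod}\ d)}k^{-s}$. *)

From Stdlib Require Import Reals Lra Lia ZArith Arith ClassicalEpsilon.
Open Scope R_scope.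

Fixpoint sumR (f : nat -> R) (N : nat) : R :=
  match N with O => 0 | S N' => sumR f N' + f N' end.
Fixpoint prodR (f : nat -> R) (N : nat) : R :=
  match N with O => 1 | S N' => prodR f N' * f N' end.

(* value of a series (if it converges; an arbitrary real otherwise) *)
Definition series_value (u : nat -> R) : R :=
  epsilon (inhabits 0) (fun l => infinite_sum u l).

(* Q_n(t) = prod_{dn < l <= (d+2b)n} (t-l)(t+l); l = dn+1+i, i < 2bn *)
Definition Qn (d b n : nat) (t : R) : R :=
  prodR (fun i => (t - INR (d*n + 1 + i)) * (t + INR (d*n + 1 + i))) (2*b*n).

(* R_n(t) = (prod_{-n<=l<=n} (t - d l))^a ; l = i - n, i <= 2n *)
Definition Rn (d a n : nat) (t : R) : R :=
  (prodR (fun i => t - INR d * (INR i - INR n)) (2*n + 1)) ^ a.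

Definition Pn (d a b n : nat) (t : R) : R :=
  Qn d b n t / Rn d a n t * (INR (fact (2*n))) ^ (a - 2*b) * (INR d) ^ (2*n*a).

(* A : Z -> nat -> R gives the partial fraction coefficients A_{l,j}(n):
   P_n(t) = sum_{j=1}^a sum_{l=-n}^n A_{l,j} (t - d l)^{-j} for all t not a pole. *)
Definition is_partial_fraction (d a b n : nat) (A : Z -> nat -> R) : Prop :=
  forall t : R,
    (forall l : Z, (- Z.of_nat n <= l <= Z.of_nat n)%Z -> t <> INR d * IZR l) ->
    Pn d a b n t =
      sumR (fun j0 =>
        sumR (fun i => A (Z.of_nat i - Z.of_nat n)%Z (S j0)
                         / (t - INR d * IZR (Z.of_nat i - Z.of_nat n)) ^ (S j0))
             (2*n + 1))
        a.

Definition Acoef (n : nat) (A : Z -> nat -> R) (j : nat) : R :=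
  sumR (fun i => A (Z.of_nat i - Z.of_nat n)%Z j) (2*n + 1).

(* B_m = sum_{j=1}^a sum_{l=-n}^n A_{l,j} sum_{k=0}^{n-l-1} (dk+m)^{-j};
   with l = i - n, the inner sum has n - l = 2n - i terms. *)
Definition Bcoef (d a n : nat) (A : Z -> nat -> R) (m : nat) : R :=
  sumR (fun j0 =>
    sumR (fun i => A (Z.of_nat i - Z.of_nat n)%Z (S j0) *
                   sumR (fun k => / (INR (d*k + m)) ^ (S j0)) (2*n - i))
         (2*n + 1))
    a.

(* terms of I_m = sum_{k > dn, k = m mod d} P_n(k) *)
Definition Iterm (d a b n m : nat) (k : nat) : R :=
  if andb (Nat.ltb (d*n) k) (Nat.eqb (k mod d) (m mod d)) then Pn d a b n (INR k) else 0.

(* terms of zeta_m(s) = sum_{k>=1, k = m mod d} k^{-s}, s a natural number *)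
Definition zeta_term (d m s : nat) (k : nat) : R :=
  if andb (Nat.leb 1 k) (Nat.eqb (k mod d) (m mod d)) then / (INR k) ^ s else 0.
Definition zeta_m (d m s : nat) : R := series_value (zeta_term d m s).

(* L(s) = sum_{k>=1} a_k k^{-s}, where a_k (k>=1) is the d-periodic extension
   of al 1, ..., al d, i.e. a_k = al (((k-1) mod d) + 1). *)
Definition L_term (d : nat) (al : nat -> R) (s : nat) (k : nat) : R :=
  if Nat.leb 1 k then al (((k - 1) mod d) + 1)%nat / (INR k) ^ s else 0.
Definition Lfun (d : nat) (al : nat -> R) (s : nat) : R := series_value (L_term d al s).

Definition sum_j_parity (a : nat) (F : nat -> R) : R :=
  sumR (fun j => if andb (Nat.leb 2 j) (Nat.eqb (j mod 2) (a mod 2)) then F j else 0) (S a).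

From Stdlib Require Import Reals Lra Lia ZArith Arith ClassicalEpsilon.
Open Scope R_scope.

(* Along k = d(t + n) + m the partial fraction expansion turns P_n(k) into
   sum_{j,l} A_{l,j} (d(t + n - l) + m)^-j, so a partial sum of I_m is a combination of partial
   sums of zeta_m(j) shifted by n - l; undoing the shift produces B_m and finitely many terms
   tending to 0. The divergent j = 1 part vanishes because A_1 = 0: t P_n(t) -> A_1, while
   P_n(t) = O(t^-2) as deg R_n - deg Q_n = (2n+1)a - 4bn >= 2. The parts with j and a of
   different parity vanish because P_n(-t) = (-1)^a P_n(t) and partial fraction expansions
   are unique. *)

(** * Finite sums and products *)

Lemma sumR_ext f g N : (forall i, (i < N)%nat -> f i = g i) -> sumR f N = sumR g N.
Proof. induction N as [|N IH]; simpl; intros H; auto. rewrite IH, H; auto. Qed.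

Lemma sumR_plus f g N : sumR (fun i => f i + g i) N = sumR f N + sumR g N.
Proof. induction N as [|N IH]; simpl; [lra|]. rewrite IH; lra. Qed.

Lemma sumR_minus f g N : sumR (fun i => f i - g i) N = sumR f N - sumR g N.
Proof. induction N as [|N IH]; simpl; [lra|]. rewrite IH; lra. Qed.

Lemma sumR_scal_l c f N : sumR (fun i => c * f i) N = c * sumR f N.
Proof. induction N as [|N IH]; simpl; [lra|]. rewrite IH; lra. Qed.

Lemma sumR_scal_r c f N : sumR (fun i => f i * c) N = sumR f N * c.
Proof. induction N as [|N IH]; simpl; [lra|]. rewrite IH; lra. Qed.

Lemma sumR_eq_0 f N : (forall i, (i < N)%nat -> f i = 0) -> sumR f N = 0.
Proof.
  intros H. rewrite (sumR_ext f (fun _ => 0)) by auto. clear H.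
  induction N as [|N IH]; simpl; lra.
Qed.

Lemma sumR_swap (f : nat -> nat -> R) N M :
  sumR (fun i => sumR (f i) M) N = sumR (fun j => sumR (fun i => f i j) N) M.
Proof.
  induction N as [|N IH]; simpl.
  - symmetry; apply sumR_eq_0; auto.
  - rewrite IH, <- sumR_plus. reflexivity.
Qed.

Lemma sumR_add f N M : sumR f (N + M) = sumR f N + sumR (fun i => f (N + i)%nat) M.
Proof.
  induction M as [|M IH]; simpl; [rewrite Nat.add_0_r; lra|].
  rewrite Nat.add_succ_r; simpl. rewrite IH; lra.
Qed.

Lemma sumR_shift_start (w : nat -> R) s N :
  sumR (fun t => w (s + t)%nat) N = sumR w N + sumR (fun t => w (N + t)%nat) s - sumR w s.
Proof. pose proof (sumR_add w s N). pose proof (sumR_add w N s). rewrite Nat.add_comm in H. lra. Qed.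

Lemma sumR_first f N : sumR f (S N) = f O + sumR (fun i => f (S i)) N.
Proof. induction N as [|N IH]; simpl in *; [lra|]. rewrite IH. lra. Qed.

Lemma sumR_rev f N : sumR f N = sumR (fun i => f (N - 1 - i)%nat) N.
Proof.
  induction N as [|N IH]; auto.
  rewrite (sumR_first (fun i => f (S N - 1 - i)%nat)).
  replace (S N - 1 - 0)%nat with N by lia. simpl sumR at 1.
  rewrite IH, Rplus_comm. f_equal. apply sumR_ext; intros. f_equal; lia.
Qed.

Lemma sumR_single f N i0 :
  (i0 < N)%nat -> (forall i, (i < N)%nat -> i <> i0 -> f i = 0) -> sumR f N = f i0.
Proof.
  induction N as [|N IH]; intros Hi H; [lia|]. simpl.
  destruct (Nat.eq_dec i0 N) as [->|Hne].
  - rewrite sumR_eq_0; [lra|]. intros; apply H; lia.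
  - rewrite IH, (H N) by (lia || (intros; apply H; lia)). lra.
Qed.

Lemma sumR_split f N i0 : (i0 < N)%nat ->
  sumR f N = f i0 + sumR (fun i => if Nat.eqb i i0 then 0 else f i) N.
Proof.
  intros Hi. replace (f i0) with (if Nat.eqb i0 i0 then f i0 else 0)
    by (rewrite Nat.eqb_refl; reflexivity).
  rewrite <- (sumR_single (fun i => if Nat.eqb i i0 then f i else 0) N i0 Hi).
  - rewrite <- sumR_plus. apply sumR_ext; intros. destruct (Nat.eqb i i0); lra.
  - intros i _ Hne. apply Nat.eqb_neq in Hne. rewrite Hne. reflexivity.
Qed.

Lemma prodR_ext f g N : (forall i, (i < N)%nat -> f i = g i) -> prodR f N = prodR g N.
Proof. induction N as [|N IH]; simpl; intros H; auto. rewrite IH, H; auto. Qed.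

Lemma prodR_le f g N :
  (forall i, (i < N)%nat -> 0 <= f i <= g i) -> 0 <= prodR f N <= prodR g N.
Proof.
  induction N as [|N IH]; simpl; intros H; [lra|].
  destruct (H N) as [H1 H2]; [lia|]. destruct IH as [H3 H4]; [auto|].
  split; [apply Rmult_le_pos | apply Rmult_le_compat]; lra.
Qed.

Lemma prodR_const c N : prodR (fun _ => c) N = c ^ N.
Proof. induction N as [|N IH]; simpl; auto. rewrite IH; ring. Qed.

Lemma prodR_opp f N : prodR (fun i => - f i) N = (-1) ^ N * prodR f N.
Proof. induction N as [|N IH]; simpl; [ring|]. rewrite IH; ring. Qed.

Lemma prodR_first f N : prodR f (S N) = f O * prodR (fun i => f (S i)) N.
Proof. induction N as [|N IH]; simpl in *; [lra|]. rewrite IH. lra. Qed.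

Lemma prodR_rev f N : prodR f N = prodR (fun i => f (N - 1 - i)%nat) N.
Proof.
  induction N as [|N IH]; auto.
  rewrite (prodR_first (fun i => f (S N - 1 - i)%nat)).
  replace (S N - 1 - 0)%nat with N by lia. simpl prodR at 1.
  rewrite IH, Rmult_comm. f_equal. apply prodR_ext; intros. f_equal; lia.
Qed.

(** * Series *)

Lemma infinite_sum_iff u l : infinite_sum u l <-> Un_cv (fun N => sumR u N) l.
Proof.
  assert (Hf : forall N, sum_f_R0 u N = sumR u (S N)).
  { induction N as [|N IH]; simpl in *; [lra | rewrite IH; reflexivity]. }
  split; intros H eps Heps; destruct (H eps Heps) as [N HN].
  - exists (S N). intros [|k] Hk; [lia|]. rewrite <- Hf. apply HN. lia.
  - exists N. intros k Hk. rewrite Hf. apply HN. lia.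
Qed.

Lemma series_value_eq u l : infinite_sum u l -> series_value u = l.
Proof.
  intros H. unfold series_value. apply (uniqueness_sum u); auto.
  apply epsilon_spec. exists l; auto.
Qed.

Lemma Un_cv_const c : Un_cv (fun _ => c) c.
Proof. intros eps He. exists O. intros. unfold Rdist. rewrite Rminus_diag, Rabs_R0; lra. Qed.

Lemma Un_cv_scal c u l : Un_cv u l -> Un_cv (fun N => c * u N) (c * l).
Proof. intros H. apply CV_mult; [apply Un_cv_const | exact H]. Qed.

Lemma Un_cv_sumR (f : nat -> nat -> R) L K :
  (forall j, (j < K)%nat -> Un_cv (f j) (L j)) ->
  Un_cv (fun N => sumR (fun j => f j N) K) (sumR L K).
Proof.
  induction K as [|K IH]; intros H; simpl; [apply Un_cv_const|].
  apply CV_plus; [apply IH; intros; apply H | apply H]; lia.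
Qed.

Lemma Un_cv_0_le_inv u : (forall N, 0 <= u N <= / INR (S N)) -> Un_cv u 0.
Proof.
  intros H eps Heps. destruct (archimed_cor1 eps Heps) as [N0 [HN0 HN0pos]].
  exists N0. intros N HN. unfold Rdist. rewrite Rminus_0_r.
  destruct (H N) as [H1 H2]. rewrite Rabs_right by lra.
  assert (/ INR (S N) <= / INR N0).
  { apply Rinv_le_contravar; [apply lt_0_INR; lia | apply le_INR; lia]. }
  lra.
Qed.

(** * Sums along an arithmetic progression and zeta_m *)

(* progression_count d c K = #{t | d t + c < K} *)
Fixpoint progression_count (d c K : nat) : nat :=
  match K with
  | O => O
  | S K' => if Nat.eqb K' (d * progression_count d c K' + c)
            then S (progression_count d c K') else progression_count d c K'
  end.

Section Progression.
Variables (u : nat -> R) (d c : nat).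
Hypothesis hd : (1 <= d)%nat.
Hypothesis u_supp : forall k, (forall t, k <> (d * t + c)%nat) -> u k = 0.

Lemma sumR_progression K :
  (K <= d * progression_count d c K + c)%nat /\
  (forall t, (t < progression_count d c K)%nat -> (d * t + c < K)%nat) /\
  sumR u K = sumR (fun t => u (d * t + c)%nat) (progression_count d c K).
Proof.
  induction K as [|K [Hle [Hlt Hsum]]]; simpl; [repeat split; intros; lia|].
  set (p := progression_count d c K) in *.
  destruct (Nat.eqb_spec K (d * p + c)) as [E|E].
  - repeat split; [nia | intros t Ht; nia |]. simpl. rewrite Hsum, <- E. reflexivity.
  - repeat split; [lia | intros t Ht; specialize (Hlt t Ht); lia |].
    rewrite Hsum, (u_supp K); [lra|]. intros t Ht.
    destruct (Nat.lt_ge_cases t p) as [Htp|Htp]; [specialize (Hlt t Htp) | ]; nia.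
Qed.

Lemma Un_cv_sumR_progression L :
  Un_cv (fun N => sumR (fun t => u (d * t + c)%nat) N) L -> Un_cv (fun K => sumR u K) L.
Proof.
  intros H eps Heps. destruct (H eps Heps) as [N0 HN].
  exists (d * N0 + c)%nat. intros K HK.
  destruct (sumR_progression K) as [Hle [_ ->]]. apply HN. nia.
Qed.

End Progression.

Lemma mod_eq_progression d m k :
  (1 <= m <= d)%nat -> (1 <= k)%nat -> k mod d = m mod d -> exists t, k = (d * t + m)%nat.
Proof.
  intros Hm Hk E. pose proof (Nat.div_mod_eq k d) as Hdm.
  destruct (Nat.eq_dec m d) as [->|Hne].
  - rewrite Nat.Div0.mod_same in E. rewrite E in Hdm.
    destruct (k / d)%nat as [|q]; [lia|]. exists q. lia.
  - rewrite (Nat.mod_small m d) in E by lia. exists (k / d)%nat. lia.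
Qed.

Lemma progression_mod d m t : ((d * t + m) mod d = m mod d)%nat.
Proof. rewrite Nat.mul_comm, Nat.add_comm. apply Nat.Div0.mod_add. Qed.

Definition zeta_prog (d m j t : nat) : R := / INR (d * t + m) ^ j.

Section Zeta.
Variables d m j : nat.
Hypothesis hd : (1 <= d)%nat.
Hypothesis hm : (1 <= m <= d)%nat.

Lemma zeta_term_progression t : zeta_term d m j (d * t + m) = zeta_prog d m j t.
Proof.
  unfold zeta_term. rewrite progression_mod, Nat.eqb_refl.
  destruct (Nat.leb_spec 1 (d * t + m)); [reflexivity | lia].
Qed.

Lemma zeta_term_off_progression k : (forall t, k <> (d * t + m)%nat) -> zeta_term d m j k = 0.
Proof.
  intros Hk. unfold zeta_term.
  destruct (Nat.leb_spec 1 k); [|reflexivity].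
  destruct (Nat.eqb_spec (k mod d) (m mod d)) as [E|]; [|reflexivity].
  destruct (mod_eq_progression d m k hm H E) as [t Ht]. exfalso; exact (Hk t Ht).
Qed.

Lemma zeta_prog_tail_cv0 s : (1 <= j)%nat -> Un_cv (fun N => zeta_prog d m j (N + s)) 0.
Proof.
  intros Hj. apply Un_cv_0_le_inv. intros N. unfold zeta_prog.
  assert (Hx : INR (S N) <= INR (d * (N + s) + m)) by (apply le_INR; nia).
  rewrite S_INR in Hx. pose proof (pos_INR N).
  assert (Hp : INR (d * (N + s) + m) <= INR (d * (N + s) + m) ^ j).
  { rewrite <- (pow_1 (INR (d * (N + s) + m))) at 1. apply Rle_pow; [lra | lia]. }
  rewrite S_INR.
  split; [left; apply Rinv_0_lt_compat; lra | apply Rinv_le_contravar; lra].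
Qed.

Lemma zeta_prog_series l :
  Un_cv (fun N => sumR (zeta_prog d m j) N) l -> infinite_sum (zeta_term d m j) l.
Proof.
  intros Hl. apply infinite_sum_iff, (Un_cv_sumR_progression _ d m hd zeta_term_off_progression).
  apply (Un_cv_ext (fun N => sumR (zeta_prog d m j) N)); [|exact Hl].
  intros N. apply sumR_ext. intros t _. symmetry. apply zeta_term_progression.
Qed.

Hypothesis hj : (2 <= j)%nat.

(* Telescoping bound: 1/(d s + m)^j <= 1/(s+1)^2 <= 2/(s+1) - 2/(s+2). *)
Lemma zeta_prog_le s : zeta_prog d m j s <= 2 / (INR s + 1) - 2 / (INR s + 2).
Proof.
  unfold zeta_prog. pose proof (pos_INR s).
  assert (Hx : INR s + 1 <= INR (d * s + m)) by (rewrite <- S_INR; apply le_INR; nia).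
  assert (Hp : (INR s + 1) ^ 2 <= INR (d * s + m) ^ j).
  { apply Rle_trans with (INR (d * s + m) ^ 2); [apply pow_incr; lra | apply Rle_pow; [lra | lia]]. }
  apply Rle_trans with (/ (INR s + 1) ^ 2); [apply Rinv_le_contravar; [apply pow_lt|]; lra|].
  replace (2 / (INR s + 1) - 2 / (INR s + 2)) with (2 / ((INR s + 1) * (INR s + 2)))
    by (field; lra).
  apply Rmult_le_reg_r with ((INR s + 1) ^ 2 * (INR s + 2));
    [apply Rmult_lt_0_compat; [apply pow_lt|]; lra|].
  field_simplify; lra.
Qed.

Lemma zeta_prog_summable : exists l, Un_cv (fun N => sumR (zeta_prog d m j) N) l.
Proof.
  destruct (growing_cv (fun N => sumR (zeta_prog d m j) N)) as [l Hl]; [| |exists l; exact Hl].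
  - intros N. simpl. unfold zeta_prog.
    assert (0 < / INR (d * N + m) ^ j) by (apply Rinv_0_lt_compat, pow_lt, lt_0_INR; lia). lra.
  - exists 2. intros x [N ->].
    assert (Hle : sumR (zeta_prog d m j) N <= 2 - 2 / (INR N + 1)).
    { induction N as [|N IH]; cbn [sumR]; [simpl; lra|]. rewrite S_INR.
      pose proof (zeta_prog_le N). replace (INR N + 1 + 1) with (INR N + 2) by ring. lra. }
    assert (0 < 2 / (INR N + 1)) by (pose proof (pos_INR N); apply Rdiv_lt_0_compat; lra). lra.
Qed.

Lemma Un_cv_zeta_prog : Un_cv (fun N => sumR (zeta_prog d m j) N) (zeta_m d m j).
Proof.
  destruct zeta_prog_summable as [l Hl].
  unfold zeta_m. rewrite (series_value_eq _ l (zeta_prog_series l Hl)). exact Hl.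
Qed.

Lemma infinite_sum_zeta_term : infinite_sum (zeta_term d m j) (zeta_m d m j).
Proof. exact (zeta_prog_series _ Un_cv_zeta_prog). Qed.

End Zeta.

(** * Uniqueness of partial fraction expansions *)

Definition pfrac (M a : nat) (c : nat -> nat -> R) (x : nat -> R) (t : R) : R :=
  sumR (fun j0 => sumR (fun i => c i (S j0) / (t - x i) ^ (S j0)) M) a.

Lemma continuity_pt_sumR (g : nat -> R -> R) N x0 :
  (forall i, (i < N)%nat -> continuity_pt (g i) x0) ->
  continuity_pt (fun t => sumR (fun i => g i t) N) x0.
Proof.
  induction N as [|N IH]; intros H; simpl.
  - apply continuity_pt_const. intros ? ?; reflexivity.
  - apply continuity_pt_plus; [apply IH; intros; apply H | apply H]; lia.
Qed.

Lemma exists_avoiding (x : nat -> R) M lo hi :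
  lo < hi -> exists t, lo < t < hi /\ forall i, (i < M)%nat -> t <> x i.
Proof.
  revert lo hi. induction M as [|M IH]; intros lo hi H.
  - exists ((lo + hi) / 2). split; [lra | intros; lia].
  - destruct (IH lo hi H) as [t [Ht Hx]].
    destruct (Req_dec t (x M)) as [E|E].
    + destruct (IH lo t ltac:(lra)) as [t' [Ht' Hx']]. exists t'. split; [lra|].
      intros i Hi. destruct (Nat.eq_dec i M) as [->|]; [lra | apply Hx'; lia].
    + exists t. split; [exact Ht|]. intros i Hi.
      destruct (Nat.eq_dec i M) as [->|]; [exact E | apply Hx; lia].
Qed.

Lemma continuous_zero_off_finite (x : nat -> R) M H x0 :
  continuity_pt H x0 -> (forall t, (forall i, (i < M)%nat -> t <> x i) -> H t = 0) -> H x0 = 0.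
Proof.
  intros Hc Hz. destruct (Req_dec (H x0) 0) as [|Hne]; [assumption|]. exfalso.
  destruct (continuous_neq_0 H x0 Hc Hne) as [[eps Heps] Hnz]; simpl in Hnz.
  destruct (exists_avoiding x M x0 (x0 + eps)) as [t [Ht Hx]]; [lra|].
  apply (Hnz (t - x0)); [rewrite Rabs_right; lra|].
  replace (x0 + (t - x0)) with t by ring. apply Hz, Hx.
Qed.

Section PfracUnique.
Variables (M : nat) (x : nat -> R).
Hypothesis x_inj : forall i i', (i < M)%nat -> (i' < M)%nat -> i <> i' -> x i <> x i'.

(* Multiplying by (t - x i0)^(a+1) leaves a function continuous at x i0 with value
   equal to the top coefficient at that pole. *)
Lemma pfrac_top_coef_0 a c i0 : (i0 < M)%nat ->
  (forall t, (forall i, (i < M)%nat -> t <> x i) -> pfrac M (S a) c x t = 0) ->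
  c i0 (S a) = 0.
Proof.
  intros Hi0 Hz. set (x0 := x i0).
  set (rest := fun t => sumR (fun j0 => sumR (fun i =>
    if Nat.eqb i i0 then 0 else c i (S j0) / (t - x i) ^ S j0) M) (S a)).
  set (H := fun t => sumR (fun j0 => c i0 (S j0) * (t - x0) ^ (a - j0)) (S a)
                     + (t - x0) ^ S a * rest t).
  assert (Hpole : forall t, t <> x0 -> H t = (t - x0) ^ S a * pfrac M (S a) c x t).
  { intros t Ht. unfold H, rest, pfrac.
    rewrite <- !sumR_scal_l, <- sumR_plus. apply sumR_ext; intros j0 Hj0.
    rewrite (sumR_split (fun i => c i (S j0) / (t - x i) ^ S j0) M i0 Hi0). fold x0.
    replace (S a) with ((a - j0) + S j0)%nat by lia. rewrite pow_add.
    field. apply pow_nonzero. lra. }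
  assert (Hcont : continuity_pt H x0).
  { apply continuity_pt_plus.
    - apply (continuity_pt_sumR (fun j0 t => c i0 (S j0) * (t - x0) ^ (a - j0))).
      intros; reg.
    - apply continuity_pt_mult; [reg|].
      apply continuity_pt_sumR; intros j0 _. apply continuity_pt_sumR; intros i Hi.
      destruct (Nat.eqb_spec i i0) as [|Hne].
      + apply continuity_pt_const. intros ? ?; reflexivity.
      + reg. apply pow_nonzero. intro E. apply (x_inj i0 i); auto. unfold x0 in E. lra. }
  assert (Hx0 : H x0 = c i0 (S a)).
  { unfold H. rewrite Rminus_diag, (pow_i (S a)), Rmult_0_l, Rplus_0_r by lia.
    cbn [sumR]. rewrite sumR_eq_0, Nat.sub_diag; [simpl; ring|].
    intros j0 Hj0. rewrite pow_i by lia. ring. }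
  rewrite <- Hx0. apply (continuous_zero_off_finite x M); [exact Hcont|].
  intros t Ht. rewrite Hpole by exact (Ht i0 Hi0). rewrite Hz by exact Ht. ring.
Qed.

Lemma pfrac_unique a c :
  (forall t, (forall i, (i < M)%nat -> t <> x i) -> pfrac M a c x t = 0) ->
  forall i j0, (i < M)%nat -> (j0 < a)%nat -> c i (S j0) = 0.
Proof.
  revert c. induction a as [|a IH]; intros c Hz i j0 Hi Hj; [lia|].
  assert (Htop : forall i, (i < M)%nat -> c i (S a) = 0)
    by (intros; eapply pfrac_top_coef_0; eauto).
  destruct (Nat.eq_dec j0 a) as [->|Hne]; [auto|].
  apply (IH c); [|exact Hi|lia]. intros t Ht. rewrite <- (Hz t Ht). unfold pfrac. cbn [sumR].
  rewrite (sumR_eq_0 (fun i => c i (S a) / (t - x i) ^ S a)); [ring|].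
  intros i' Hi'. rewrite Htop by exact Hi'. unfold Rdiv. ring.
Qed.

End PfracUnique.

(** * Partial fractions of P_n and parity *)

Lemma inv_neg1_pow k : / (-1) ^ k = (-1) ^ k.
Proof. rewrite <- pow_inv. f_equal. field. Qed.

Lemma neg1_pow_mod2 k : (-1) ^ k = (-1) ^ (k mod 2).
Proof.
  rewrite (Nat.div_mod_eq k 2) at 1. rewrite pow_add, pow_mult.
  replace ((-1) ^ 2) with 1 by ring. rewrite pow1. ring.
Qed.

Lemma pfrac_minus_scal M a c1 c2 k x t :
  pfrac M a (fun i j => c1 i j - k * c2 i j) x t = pfrac M a c1 x t - k * pfrac M a c2 x t.
Proof.
  unfold pfrac. rewrite <- sumR_scal_l, <- sumR_minus. apply sumR_ext; intros j0 _.
  rewrite <- sumR_scal_l, <- sumR_minus. apply sumR_ext; intros i _. unfold Rdiv. ring.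
Qed.

Lemma pfrac_opp M a c x t : (forall i, (i < M)%nat -> x (M - 1 - i)%nat = - x i) ->
  pfrac M a c x (- t) = pfrac M a (fun i j => (-1) ^ j * c (M - 1 - i)%nat j) x t.
Proof.
  intros Hx. unfold pfrac. apply sumR_ext; intros j0 _. rewrite sumR_rev.
  apply sumR_ext; intros i Hi. rewrite Hx by exact Hi.
  replace (- t - - x i) with ((-1) * (t - x i)) by ring.
  rewrite Rpow_mult_distr. unfold Rdiv. rewrite Rinv_mult, inv_neg1_pow. ring.
Qed.

(* With l = i - n, the poles of P_n are d l and its coefficients are A_{l,j}. *)
Definition pole (d n i : nat) : R := INR d * IZR (Z.of_nat i - Z.of_nat n).
Definition Acoef_at (n : nat) (A : Z -> nat -> R) (i j : nat) : R :=
  A (Z.of_nat i - Z.of_nat n)%Z j.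

Lemma pole_INR d n i : pole d n i = INR d * (INR i - INR n).
Proof. unfold pole. rewrite minus_IZR, <- !INR_IZR_INZ. reflexivity. Qed.

Lemma pole_rev d n i : (i < 2 * n + 1)%nat -> pole d n (2 * n + 1 - 1 - i) = - pole d n i.
Proof.
  intros Hi. unfold pole. rewrite Ropp_mult_distr_r, <- opp_IZR. do 2 f_equal. lia.
Qed.

Lemma pole_inj d n i i' : (1 <= d)%nat -> pole d n i = pole d n i' -> i = i'.
Proof.
  intros Hd E. unfold pole in E. apply Rmult_eq_reg_l in E; [|apply not_0_INR; lia].
  apply eq_IZR in E. lia.
Qed.

Lemma pole_abs_le d n i : (i < 2 * n + 1)%nat -> Rabs (pole d n i) <= INR (d * n).
Proof.
  intros Hi. unfold pole. rewrite Rabs_mult, Rabs_right, mult_INR by (apply Rle_ge, pos_INR).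
  apply Rmult_le_compat_l; [apply pos_INR|]. rewrite INR_IZR_INZ, Rabs_Zabs.
  apply IZR_le. lia.
Qed.

Lemma Pn_pfrac d a b n A t : is_partial_fraction d a b n A ->
  (forall i, (i < 2 * n + 1)%nat -> t <> pole d n i) ->
  Pn d a b n t = pfrac (2 * n + 1) a (Acoef_at n A) (pole d n) t.
Proof.
  intros HA Ht. apply HA. intros l Hl.
  specialize (Ht (Z.to_nat (l + Z.of_nat n))). unfold pole in Ht.
  replace (Z.of_nat (Z.to_nat (l + Z.of_nat n)) - Z.of_nat n)%Z with l in Ht by lia.
  apply Ht. lia.
Qed.

Lemma Pn_opp d a b n t : Pn d a b n (- t) = (-1) ^ a * Pn d a b n t.
Proof.
  assert (HQ : Qn d b n (- t) = Qn d b n t) by (unfold Qn; apply prodR_ext; intros; ring).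
  assert (HR : Rn d a n (- t) = (-1) ^ a * Rn d a n t).
  { unfold Rn. rewrite (prodR_rev (fun i => t - INR d * (INR i - INR n))), <- Rpow_mult_distr.
    f_equal. replace (-1) with ((-1) ^ (2 * n + 1)) at 1
      by (replace (2 * n + 1)%nat with (S (2 * n)) by lia; apply pow_1_odd).
    rewrite <- prodR_opp. apply prodR_ext. intros i Hi.
    replace (2 * n + 1 - 1 - i)%nat with (2 * n - i)%nat by lia.
    rewrite minus_INR, mult_INR by lia. simpl INR. ring. }
  unfold Pn. rewrite HQ, HR. unfold Rdiv. rewrite Rinv_mult, inv_neg1_pow. ring.
Qed.

Section Parity.
Variables (d a b n : nat) (A : Z -> nat -> R).
Hypothesis hd : (1 <= d)%nat.
Hypothesis HA : is_partial_fraction d a b n A.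

(* P_n(-t) = (-1)^a P_n(t) and uniqueness give (-1)^j A_{-l,j} = (-1)^a A_{l,j}. *)
Lemma Acoef_at_opp i j0 : (i < 2 * n + 1)%nat -> (j0 < a)%nat ->
  (-1) ^ S j0 * Acoef_at n A (2 * n + 1 - 1 - i) (S j0) - (-1) ^ a * Acoef_at n A i (S j0) = 0.
Proof.
  revert i j0. apply (pfrac_unique (2 * n + 1) (pole d n)
    ltac:(intros i i' _ _ Hne E; exact (Hne (pole_inj d n i i' hd E))) a
    (fun i j => (-1) ^ j * Acoef_at n A (2 * n + 1 - 1 - i) j - (-1) ^ a * Acoef_at n A i j)).
  intros t Ht. rewrite pfrac_minus_scal, <- pfrac_opp by exact (pole_rev d n).
  assert (Hopp : forall i, (i < 2 * n + 1)%nat -> - t <> pole d n i).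
  { intros i Hi E. apply (Ht (2 * n + 1 - 1 - i)%nat); [lia|]. rewrite pole_rev by exact Hi. lra. }
  rewrite <- (Pn_pfrac d a b n A t HA Ht), <- (Pn_pfrac d a b n A (- t) HA Hopp), Pn_opp.
  ring.
Qed.

Lemma Acoef_wrong_parity j : (1 <= j <= a)%nat ->
  Nat.eqb (j mod 2) (a mod 2) = false -> Acoef n A j = 0.
Proof.
  intros Hj Hpar. destruct j as [|j0]; [lia|].
  assert (Hsum : ((-1) ^ S j0 - (-1) ^ a) * Acoef n A (S j0) = 0).
  { rewrite <- (sumR_eq_0 _ (2 * n + 1) (fun i Hi => Acoef_at_opp i j0 Hi ltac:(lia))).
    rewrite sumR_minus, sumR_scal_l, sumR_scal_l.
    replace (sumR (fun i => Acoef_at n A (2 * n + 1 - 1 - i) (S j0)) (2 * n + 1))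
      with (Acoef n A (S j0))
      by exact (sumR_rev (fun i => Acoef_at n A i (S j0)) (2 * n + 1)).
    unfold Acoef, Acoef_at. ring. }
  apply Nat.eqb_neq in Hpar. rewrite (neg1_pow_mod2 (S j0)), (neg1_pow_mod2 a) in Hsum.
  pose proof (Nat.mod_upper_bound (S j0) 2 ltac:(lia)).
  pose proof (Nat.mod_upper_bound a 2 ltac:(lia)).
  destruct (S j0 mod 2) as [|[|]]; destruct (a mod 2) as [|[|]]; try lia; simpl in Hsum; lra.
Qed.

End Parity.

(** * Behaviour at infinity *)

Definition is_O_inv (f : R -> R) : Prop :=
  exists C T, forall t, T <= t -> Rabs (f t) <= C / t.

Lemma is_O_inv_ext f g : (forall t, f t = g t) -> is_O_inv f -> is_O_inv g.
Proof. intros E [C [T H]]. exists C, T. intros t Ht. rewrite <- E. auto. Qed.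

Lemma is_O_inv_plus f g : is_O_inv f -> is_O_inv g -> is_O_inv (fun t => f t + g t).
Proof.
  intros [C1 [T1 H1]] [C2 [T2 H2]]. exists (C1 + C2), (Rmax T1 T2). intros t Ht.
  specialize (H1 t (Rle_trans _ _ _ (Rmax_l T1 T2) Ht)).
  specialize (H2 t (Rle_trans _ _ _ (Rmax_r T1 T2) Ht)).
  eapply Rle_trans; [apply Rabs_triang|]. unfold Rdiv in *. lra.
Qed.

Lemma is_O_inv_scal c f : is_O_inv f -> is_O_inv (fun t => c * f t).
Proof.
  intros [C [T H]]. exists (Rabs c * C), T. intros t Ht. rewrite Rabs_mult.
  unfold Rdiv. rewrite Rmult_assoc. apply Rmult_le_compat_l; [apply Rabs_pos | apply H, Ht].
Qed.

Lemma is_O_inv_minus f g : is_O_inv f -> is_O_inv g -> is_O_inv (fun t => f t - g t).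
Proof.
  intros Hf Hg. apply (is_O_inv_ext (fun t => f t + -1 * g t)); [intros; ring|].
  apply is_O_inv_plus, is_O_inv_scal; assumption.
Qed.

Lemma is_O_inv_sumR (f : nat -> R -> R) N :
  (forall i, (i < N)%nat -> is_O_inv (f i)) -> is_O_inv (fun t => sumR (fun i => f i t) N).
Proof.
  induction N as [|N IH]; intros H; simpl.
  - exists 0, 0. intros. rewrite Rabs_R0. unfold Rdiv. lra.
  - apply is_O_inv_plus; [apply IH; intros; apply H | apply H]; lia.
Qed.

Lemma is_O_inv_const r : is_O_inv (fun _ => r) -> r = 0.
Proof.
  intros [C [T H]]. destruct (Req_dec r 0) as [|Hr]; [assumption|]. exfalso.
  assert (Hpos : 0 < Rabs r) by (apply Rabs_pos_lt, Hr).
  set (t := Rmax T 1 + Rabs C / Rabs r).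
  assert (HC : 0 <= Rabs C / Rabs r)
    by (unfold Rdiv; apply Rmult_le_pos; [apply Rabs_pos | left; apply Rinv_0_lt_compat, Hpos]).
  assert (Ht1 : 1 <= t) by (pose proof (Rmax_r T 1); unfold t; lra).
  specialize (H t ltac:(pose proof (Rmax_l T 1); unfold t; lra)).
  apply Rmult_le_compat_r with (r := t) in H; [|lra].
  replace (C / t * t) with C in H by (field; lra).
  assert (Rabs r * (Rabs C / Rabs r) = Rabs C) by (field; lra).
  pose proof (Rle_abs C). pose proof (Rmax_r T 1). unfold t in H. nra.
Qed.

Lemma is_O_inv_pole_term x j0 :
  is_O_inv (fun t => t / (t - x) ^ S j0 - (if Nat.eqb j0 0 then 1 else 0)).
Proof.
  exists (2 * Rabs x + 4), (2 * Rabs x + 2). intros t Ht.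
  pose proof (Rabs_pos x). pose proof (Rle_abs x). pose proof (Rle_abs (- x)).
  rewrite Rabs_Ropp in *.
  assert (Hy : t / 2 <= t - x) by lra.
  destruct j0 as [|j0]; simpl Nat.eqb.
  - rewrite pow_1. replace (t / (t - x) - 1) with (x / (t - x)) by (field; lra).
    unfold Rdiv. rewrite Rabs_mult, Rabs_inv, (Rabs_right (t - x)) by lra.
    apply Rmult_le_reg_r with (t * (t - x)); [apply Rmult_lt_0_compat; lra|].
    replace (Rabs x * / (t - x) * (t * (t - x))) with (Rabs x * t) by (field; lra).
    replace ((2 * Rabs x + 4) * / t * (t * (t - x))) with ((2 * Rabs x + 4) * (t - x))
      by (field; lra).
    nra.
  - rewrite Rminus_0_r. assert (Hp : (t - x) ^ 2 <= (t - x) ^ S (S j0)) by (apply Rle_pow; lra || lia).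
    assert (Hy2 : 0 < (t - x) ^ 2) by (apply pow_lt; lra).
    rewrite Rabs_right
      by (apply Rle_ge; unfold Rdiv; apply Rmult_le_pos; [lra | left; apply Rinv_0_lt_compat; lra]).
    apply Rle_trans with (t / (t - x) ^ 2).
    { unfold Rdiv. apply Rmult_le_compat_l; [lra | apply Rinv_le_contravar; lra]. }
    apply Rmult_le_reg_r with (t * (t - x) ^ 2); [apply Rmult_lt_0_compat; lra|].
    replace (t / (t - x) ^ 2 * (t * (t - x) ^ 2)) with (t * t) by (field; lra).
    replace ((2 * Rabs x + 4) / t * (t * (t - x) ^ 2)) with ((2 * Rabs x + 4) * (t - x) ^ 2)
      by (field; lra).
    simpl. nra.
Qed.

Lemma is_O_inv_pfrac_residue M a c x : (1 <= a)%nat ->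
  is_O_inv (fun t => t * pfrac M a c x t - sumR (fun i => c i 1%nat) M).
Proof.
  intros Ha.
  apply (is_O_inv_ext (fun t => sumR (fun j0 => sumR (fun i => c i (S j0) *
    (t / (t - x i) ^ S j0 - (if Nat.eqb j0 0 then 1 else 0))) M) a)).
  - intros t. unfold pfrac. rewrite <- sumR_scal_l.
    replace (sumR (fun i => c i 1%nat) M)
      with (sumR (fun j0 => if Nat.eqb j0 0 then sumR (fun i => c i (S j0)) M else 0) a)
      by (rewrite (sumR_single _ a 0%nat); [reflexivity | lia |];
          intros j0 _ Hj0; apply Nat.eqb_neq in Hj0; rewrite Hj0; reflexivity).
    rewrite <- sumR_minus. apply sumR_ext; intros j0 _.
    rewrite <- sumR_scal_l. destruct (Nat.eqb j0 0).
    + rewrite <- sumR_minus. apply sumR_ext; intros. unfold Rdiv. ring.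
    + rewrite Rminus_0_r. apply sumR_ext; intros. unfold Rdiv. ring.
  - apply is_O_inv_sumR; intros j0 _. apply is_O_inv_sumR; intros i _.
    apply is_O_inv_scal, is_O_inv_pole_term.
Qed.

Lemma pow_ratio_le t p e : 2 <= t -> (p + 2 <= e)%nat -> t ^ p / (t / 2) ^ e <= 2 ^ e / t ^ 2.
Proof.
  intros Ht He. replace e with (p + 2 + (e - p - 2))%nat by lia.
  set (r := (e - p - 2)%nat).
  assert (Ht0 : 0 < t) by lra. assert (Hr : 1 <= t ^ r) by (apply pow_R1_Rle; lra).
  assert (E : t ^ p / (t / 2) ^ (p + 2 + r) = 2 ^ (p + 2 + r) / (t ^ 2 * t ^ r)).
  { unfold Rdiv. rewrite Rpow_mult_distr, pow_inv, !pow_add.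
    field. repeat split; try apply pow_nonzero; lra. }
  rewrite E. unfold Rdiv. apply Rmult_le_compat_l; [apply pow_le; lra|].
  apply Rinv_le_contravar; [apply pow_lt; lra|].
  rewrite <- (Rmult_1_r (t ^ 2)) at 1. apply Rmult_le_compat_l; [apply pow_le|]; lra.
Qed.

Lemma Rabs_le_inv x c : Rabs x <= c -> - c <= x <= c.
Proof. unfold Rabs. destruct (Rcase_abs x); lra. Qed.

Section Growth.
Variables d a b n : nat.
Hypothesis hab : (2 * b <= a)%nat.
Hypothesis hb : (1 <= b)%nat.

(* Beyond this point every factor t^2 - l^2 of Q_n lies in [0, t^2] and every factor t - d l
   of R_n exceeds t/2. *)
Definition growth_threshold : R := 2 * INR (d * n + 2 * b * n) + 2.

Lemma Qn_bound t : growth_threshold <= t -> 0 <= Qn d b n t <= t ^ (4 * b * n).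
Proof.
  intros Ht. unfold Qn, growth_threshold in *.
  replace (4 * b * n)%nat with (2 * (2 * b * n))%nat by lia.
  rewrite pow_mult, <- prodR_const. apply prodR_le. intros i Hi.
  assert (HL : INR (d * n + 1 + i) <= INR (d * n + 2 * b * n)) by (apply le_INR; lia).
  pose proof (pos_INR (d * n + 1 + i)). simpl. nra.
Qed.

Lemma Rn_lower_bound t : growth_threshold <= t -> (t / 2) ^ ((2 * n + 1) * a) <= Rn d a n t.
Proof.
  intros Ht. unfold Rn, growth_threshold in *. rewrite pow_mult. apply pow_incr.
  rewrite <- prodR_const. apply prodR_le. intros i Hi.
  assert (INR (d * n) <= INR (d * n + 2 * b * n)) by (apply le_INR; lia).
  pose proof (pos_INR (d * n)). pose proof (pole_abs_le d n i Hi) as Hx.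
  rewrite pole_INR in Hx. apply Rabs_le_inv in Hx. lra.
Qed.

Lemma Pn_bound : exists K, forall t, growth_threshold <= t -> Rabs (Pn d a b n t) <= K / t ^ 2.
Proof.
  set (K0 := INR (fact (2 * n)) ^ (a - 2 * b) * INR d ^ (2 * n * a)).
  assert (HK0 : 0 <= K0) by (apply Rmult_le_pos; apply pow_le, pos_INR).
  exists (2 ^ ((2 * n + 1) * a) * K0). intros t Ht.
  assert (H2 : 2 <= t)
    by (unfold growth_threshold in Ht; pose proof (pos_INR (d * n + 2 * b * n)); lra).
  destruct (Qn_bound t Ht) as [HQ0 HQ]. pose proof (Rn_lower_bound t Ht) as HR.
  assert (HR0 : 0 < (t / 2) ^ ((2 * n + 1) * a)) by (apply pow_lt; lra).
  assert (Hratio : Qn d b n t / Rn d a n t <= t ^ (4 * b * n) / (t / 2) ^ ((2 * n + 1) * a)).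
  { unfold Rdiv. apply Rmult_le_compat; [lra | left; apply Rinv_0_lt_compat; lra | lra |].
    apply Rinv_le_contravar; lra. }
  pose proof (pow_ratio_le t (4 * b * n) ((2 * n + 1) * a) H2 ltac:(nia)).
  assert (0 <= Qn d b n t / Rn d a n t)
    by (unfold Rdiv; apply Rmult_le_pos; [lra | left; apply Rinv_0_lt_compat; lra]).
  unfold Pn. fold K0. rewrite Rmult_assoc. fold K0.
  rewrite Rabs_right by (apply Rle_ge, Rmult_le_pos; lra).
  replace (2 ^ ((2 * n + 1) * a) * K0 / t ^ 2) with (2 ^ ((2 * n + 1) * a) / t ^ 2 * K0)
    by (unfold Rdiv; ring).
  apply Rmult_le_compat_r; lra.
Qed.

Lemma is_O_inv_t_pfrac A : is_partial_fraction d a b n A ->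
  is_O_inv (fun t => t * pfrac (2 * n + 1) a (Acoef_at n A) (pole d n) t).
Proof.
  intros HA. destruct Pn_bound as [K HK]. exists K, growth_threshold. intros t Ht.
  pose proof (pos_INR (d * n)).
  assert (Hdn : INR (d * n) + 2 <= t).
  { unfold growth_threshold in Ht.
    assert (INR (d * n) <= INR (d * n + 2 * b * n)) by (apply le_INR; lia).
    lra. }
  rewrite <- (Pn_pfrac d a b n A t HA).
  - specialize (HK t Ht). rewrite Rabs_mult, Rabs_right by lra.
    replace (K / t) with (t * (K / t ^ 2)) by (field; lra).
    apply Rmult_le_compat_l; lra.
  - intros i Hi E. pose proof (pole_abs_le d n i Hi) as Hx. rewrite <- E in Hx.
    apply Rabs_le_inv in Hx. lra.
Qed.

(* t P_n(t) tends both to 0 and to A_1. *)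
Lemma Acoef_1_eq_0 A : (1 <= a)%nat -> is_partial_fraction d a b n A -> Acoef n A 1 = 0.
Proof.
  intros Ha HA. apply is_O_inv_const.
  apply (is_O_inv_ext (fun t =>
    t * pfrac (2 * n + 1) a (Acoef_at n A) (pole d n) t
    - (t * pfrac (2 * n + 1) a (Acoef_at n A) (pole d n) t
       - sumR (fun i => Acoef_at n A i 1%nat) (2 * n + 1)))); [intros; unfold Acoef, Acoef_at; ring|].
  apply is_O_inv_minus; [apply is_O_inv_t_pfrac, HA | apply is_O_inv_pfrac_residue, Ha].
Qed.

End Growth.

(** * The series I_m *)

Lemma sum_j_parity_eq a (g : nat -> R) : g 1%nat = 0 ->
  (forall j, (1 <= j <= a)%nat -> Nat.eqb (j mod 2) (a mod 2) = false -> g j = 0) ->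
  sumR (fun j0 => g (S j0)) a = sum_j_parity a g.
Proof.
  intros H1 Hpar. unfold sum_j_parity. rewrite sumR_first, Rplus_0_l.
  apply sumR_ext. intros [|j1] Hj; [simpl; exact H1|].
  change (Nat.leb 2 (S (S j1))) with true. cbn [andb].
  destruct (Nat.eqb (S (S j1) mod 2) (a mod 2)) eqn:E; [reflexivity|].
  apply Hpar; [lia | exact E].
Qed.

Lemma sum_j_parity_ext a F G :
  (forall j, (2 <= j <= a)%nat -> F j = G j) -> sum_j_parity a F = sum_j_parity a G.
Proof.
  intros H. apply sumR_ext; intros j Hj.
  destruct (Nat.leb_spec 2 j); cbn [andb]; [|reflexivity].
  destruct (Nat.eqb _ _); [apply H; lia | reflexivity].
Qed.

Lemma sum_j_parity_scal a c F : c * sum_j_parity a F = sum_j_parity a (fun j => c * F j).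
Proof.
  unfold sum_j_parity. rewrite <- sumR_scal_l. apply sumR_ext; intros j _.
  destruct (_ && _)%bool; ring.
Qed.

Lemma sum_j_parity_sumR a (F : nat -> nat -> R) N :
  sumR (fun i => sum_j_parity a (F i)) N = sum_j_parity a (fun j => sumR (fun i => F i j) N).
Proof.
  unfold sum_j_parity. rewrite sumR_swap. apply sumR_ext; intros j _.
  destruct (_ && _)%bool; [reflexivity | apply sumR_eq_0; reflexivity].
Qed.

Section Main.
Variables (d a b n : nat) (A : Z -> nat -> R).
Hypothesis hd : (1 <= d)%nat.
Hypothesis ha : (1 <= a)%nat.
Hypothesis hb : (1 <= b)%nat.
Hypothesis hab : (2 * b <= a)%nat.
Hypothesis HA : is_partial_fraction d a b n A.
Variable m : nat.
Hypothesis hm : (1 <= m <= d)%nat.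

Lemma Iterm_off_progression k :
  (forall t, k <> (d * t + (d * n + m))%nat) -> Iterm d a b n m k = 0.
Proof.
  intros Hk. unfold Iterm.
  destruct (Nat.ltb_spec (d * n) k) as [Hlt|]; [|reflexivity].
  destruct (Nat.eqb_spec (k mod d) (m mod d)) as [E|]; [|reflexivity]. exfalso.
  destruct (mod_eq_progression d m k hm ltac:(lia) E) as [s ->].
  assert (n <= s)%nat by nia.
  apply (Hk (s - n)%nat). nia.
Qed.

(* At k = d(t + n) + m the pole d l contributes A_{l,j} / (d(t + n - l) + m)^j. *)
Lemma Iterm_progression t : Iterm d a b n m (d * t + (d * n + m)) =
  sumR (fun j0 => sumR (fun i =>
    Acoef_at n A i (S j0) * zeta_prog d m (S j0) (2 * n - i + t)) (2 * n + 1)) a.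
Proof.
  unfold Iterm. replace (d * t + (d * n + m))%nat with (d * (t + n) + m)%nat by ring.
  rewrite progression_mod, Nat.eqb_refl.
  destruct (Nat.ltb_spec (d * n) (d * (t + n) + m)); [|nia]. cbn [andb].
  rewrite (Pn_pfrac d a b n A _ HA).
  - apply sumR_ext; intros j0 _. apply sumR_ext; intros i Hi. unfold zeta_prog, Rdiv.
    replace (INR (d * (t + n) + m) - pole d n i) with (INR (d * (2 * n - i + t) + m)); [reflexivity|].
    rewrite pole_INR, !plus_INR, !mult_INR, !plus_INR, minus_INR, mult_INR by lia.
    simpl INR. ring.
  - intros i Hi E. pose proof (pole_abs_le d n i Hi) as Hx. rewrite <- E in Hx.
    apply Rabs_le_inv in Hx. assert (INR (d * n) < INR (d * (t + n) + m)) by (apply lt_INR; nia).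
    lra.
Qed.

(* The boundary terms left over when the inner sums over t are shifted by n - l. *)
Definition shifted_tail (N : nat) : R :=
  sumR (fun j0 => sumR (fun i => Acoef_at n A i (S j0) *
    sumR (fun t => zeta_prog d m (S j0) (N + t)) (2 * n - i)) (2 * n + 1)) a.

Lemma Iterm_partial_sum N :
  sumR (fun t => Iterm d a b n m (d * t + (d * n + m))) N =
  sum_j_parity a (fun j => Acoef n A j * sumR (zeta_prog d m j) N)
  + shifted_tail N - Bcoef d a n A m.
Proof.
  rewrite (sumR_ext _ _ N (fun t _ => Iterm_progression t)), sumR_swap.
  rewrite <- (sum_j_parity_eq a (fun j => Acoef n A j * sumR (zeta_prog d m j) N)).
  2:{ rewrite (Acoef_1_eq_0 d a b n hab hb A ha HA). ring. }
  2:{ intros j Hj Hpar. rewrite (Acoef_wrong_parity d a b n A hd HA j Hj Hpar). ring. }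
  unfold shifted_tail, Bcoef. rewrite <- sumR_plus, <- sumR_minus. apply sumR_ext; intros j0 _.
  rewrite sumR_swap. unfold Acoef. rewrite <- sumR_scal_r, <- sumR_plus, <- sumR_minus.
  apply sumR_ext; intros i _. rewrite sumR_scal_l, sumR_shift_start. unfold Acoef_at, zeta_prog. ring.
Qed.

Lemma Un_cv_shifted_tail : Un_cv shifted_tail 0.
Proof.
  unfold shifted_tail. rewrite <- (sumR_eq_0 (fun _ => 0) a) by auto.
  apply (Un_cv_sumR (fun j0 N => _)). intros j0 _.
  rewrite <- (sumR_eq_0 (fun _ => 0) (2 * n + 1)) by auto.
  apply (Un_cv_sumR (fun i N => _)). intros i _.
  rewrite <- (Rmult_0_r (Acoef_at n A i (S j0))). apply Un_cv_scal.
  rewrite <- (sumR_eq_0 (fun _ => 0) (2 * n - i)) by auto.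
  apply (Un_cv_sumR (fun t N => _)). intros t _.
  apply (Un_cv_ext (fun N => zeta_prog d m (S j0) (N + t))); [intros; f_equal; lia|].
  apply zeta_prog_tail_cv0; lia.
Qed.

Lemma infinite_sum_Iterm : infinite_sum (Iterm d a b n m)
  (sum_j_parity a (fun j => Acoef n A j * zeta_m d m j) - Bcoef d a n A m).
Proof.
  apply infinite_sum_iff, (Un_cv_sumR_progression _ d (d * n + m) hd Iterm_off_progression).
  apply (Un_cv_ext _ _ (fun N => eq_sym (Iterm_partial_sum N))).
  replace (sum_j_parity a (fun j => Acoef n A j * zeta_m d m j) - Bcoef d a n A m)
    with (sum_j_parity a (fun j => Acoef n A j * zeta_m d m j) + 0 - Bcoef d a n A m) by ring.
  apply CV_minus; [apply CV_plus | apply Un_cv_const]; [|exact Un_cv_shifted_tail].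
  apply (Un_cv_sumR (fun j N => _)). intros j _.
  destruct (Nat.leb_spec 2 j); cbn [andb]; [|apply Un_cv_const].
  destruct (Nat.eqb (j mod 2) (a mod 2)); [|apply Un_cv_const].
  apply Un_cv_scal, Un_cv_zeta_prog; assumption.
Qed.

End Main.

(** * The L-function *)

Lemma mod_succ_eq_iff d k m0 : (1 <= d)%nat -> (1 <= k)%nat -> (m0 < d)%nat ->
  k mod d = S m0 mod d <-> m0 = (k - 1) mod d.
Proof.
  intros Hd Hk Hm. destruct k as [|k]; [lia|]. replace (S k - 1)%nat with k by lia.
  assert (Hmod : forall x, (1 <= x <= d)%nat -> x mod d = if Nat.eqb x d then 0%nat else x).
  { intros x Hx. destruct (Nat.eqb_spec x d) as [->|];
      [apply Nat.Div0.mod_same | apply Nat.mod_small; lia]. }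
  pose proof (Nat.mod_upper_bound k d ltac:(lia)).
  replace (S k) with (k + 1)%nat by lia. rewrite <- Nat.Div0.add_mod_idemp_l.
  rewrite (Hmod (k mod d + 1)%nat), (Hmod (S m0)) by lia.
  destruct (Nat.eqb_spec (k mod d + 1) d); destruct (Nat.eqb_spec (S m0) d); lia.
Qed.

Lemma L_term_decomp d al j k : (1 <= d)%nat ->
  L_term d al j k = sumR (fun m0 => al (S m0) * zeta_term d (S m0) j k) d.
Proof.
  intros Hd. unfold L_term, zeta_term. destruct (Nat.leb_spec 1 k) as [Hk|]; cbn [andb].
  - assert (Hr : ((k - 1) mod d < d)%nat) by (apply Nat.mod_upper_bound; lia).
    rewrite (sumR_single _ d ((k - 1) mod d) Hr).
    + replace (k mod d =? S ((k - 1) mod d) mod d) with true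
        by (symmetry; apply Nat.eqb_eq, mod_succ_eq_iff; auto).
      rewrite Nat.add_1_r. reflexivity.
    + intros i Hi Hne. destruct (Nat.eqb_spec (k mod d) (S i mod d)) as [E|]; [|ring].
      apply (mod_succ_eq_iff d k i Hd Hk Hi) in E. lia.
  - rewrite sumR_eq_0; [reflexivity | intros; ring].
Qed.

Lemma Lfun_decomp d al j : (1 <= d)%nat -> (2 <= j)%nat ->
  Lfun d al j = sumR (fun m0 => al (S m0) * zeta_m d (S m0) j) d.
Proof.
  intros Hd Hj. apply series_value_eq, infinite_sum_iff.
  apply (Un_cv_ext (fun K => sumR (fun m0 => al (S m0) * sumR (zeta_term d (S m0) j) K) d)).
  { intros K. rewrite (sumR_ext _ _ K (fun k _ => L_term_decomp d al j k Hd)), sumR_swap.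
    apply sumR_ext; intros. symmetry. apply sumR_scal_l. }
  apply (Un_cv_sumR (fun m0 K => _)). intros m0 Hm0.
  apply Un_cv_scal, infinite_sum_iff, infinite_sum_zeta_term; lia.
Qed.

Theorem proposition2p2 (d a b n : nat) (A : Z -> nat -> R)
  (hd : (1 <= d)%nat) (ha : (1 <= a)%nat) (hb : (1 <= b)%nat) (hab : (2*b <= a)%nat)
  (hn : (1 <= n)%nat)
  (HA : is_partial_fraction d a b n A) :
  (forall m : nat, (1 <= m <= d)%nat ->
     infinite_sum (Iterm d a b n m)
       (sum_j_parity a (fun j => Acoef n A j * zeta_m d m j) - Bcoef d a n A m))
  /\
  (forall al : nat -> R,
     sumR (fun m0 => al (S m0) * series_value (Iterm d a b n (S m0))) d
     = sum_j_parity a (fun j => Acoef n A j * Lfun d al j)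
       - sumR (fun m0 => Bcoef d a n A (S m0) * al (S m0)) d).
Proof.
  pose proof (infinite_sum_Iterm d a b n A hd ha hb hab HA) as HI.
  split; [exact HI|]. intros al.
  rewrite (sumR_ext _ (fun m0 => sum_j_parity a (fun j => Acoef n A j * (al (S m0) * zeta_m d (S m0) j))
                                 - Bcoef d a n A (S m0) * al (S m0))).
  2:{ intros m0 Hm0. rewrite (series_value_eq _ _ (HI (S m0) ltac:(lia))).
      rewrite Rmult_minus_distr_l, sum_j_parity_scal.
      f_equal; [apply sum_j_parity_ext; intros; ring | ring]. }
  rewrite sumR_minus, sum_j_parity_sumR. f_equal.
  apply sum_j_parity_ext. intros j Hj. rewrite Lfun_decomp, <- sumR_scal_l by lia. reflexivity.
Qed.
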